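(* Let ${\bf i}=(i_1,\dots,i_N)$ be a reduced word for $w_0$. Then ${\mathcal H}_{\bf i}=\Big\{\big(\sum_{i\in I}m_{1,i}h_i,\ \sum_{i\in I}m_{2,i}h_i,\ \dots,\ \sum_{i\in I}m_{N,i}h_i\big)\ \Big|\ (h_1,\dots,h_n)\in\mathbb Z^n\Big\}$.
   Context: $A=(a_{ij})_{i,j\in I}$ is the Cartan matrix of a simple Lie algebra ($a_{ij}=\alpha_j(h_i)$), $I=\{1,\dots,n\}$, $w_0$ the longest Weyl group element of length $N$. For $k\in[1,N]$ let $k^{(+)}:=\min\{l>k\mid i_l=i_k\}$ when it exists. Define linear forms on $\mathbb Z^N$: $\beta_k(x)=x_k+\sum_{k<j<k^{(+)}}a_{i_k,i_j}x_j+x_{k^{(+)}}$, and ${\mathcal H}_{\bf i}:=\{x\in\mathbb Z^N\mid\beta_k(x)=0$ for all $k$ such that $k^{(+)}$ exists (i.e. $k^{(+)}\le N$)$\}$. Let $Q'=\bigoplus_{i\in I}\mathbb Z\alpha'_i$ with reflections $s_i(\alpha'_j)=\alpha'_j-a_{ji}\alpha'_i$ (the root lattice and Weyl group action of the Langlands dual algebra). Set $\alpha^{(k)}:=s_{i_N}s_{i_{N-1}}\cdots s_{i_{k+1}}(\alpha'_{i_k})$ and write $\alpha^{(k)}=\sum_{i\in I}m_{k,i}\alpha'_i$ with $m_{k,i}\in\mathbb Z_{\ge0}$ (these $\alpha^{(k)}$ are exactly the positive roots). *)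

From HB Require Import structures.
From mathcomp Require Import all_boot all_order all_algebra.
Set Implicit Arguments. Unset Strict Implicit. Unset Printing Implicit Defensive.
Import Order.TTheory GRing.Theory Num.Theory.
Local Open Scope ring_scope.

(* Index set I = {1..n} is rendered as 'I_n;  A i j = a_ij = alpha_j(h_i). *)

(* Cartan matrix of a (finite-dimensional) simple Lie algebra: an
   indecomposable generalized Cartan matrix all of whose principal minors
   are positive (finite type, Kac Thm 4.3 / Lemma 4.4). *)
Definition is_simple_cartan (n : nat) (A : 'M[int]_n) : Prop :=
  [/\ (0 < n)%N,
      (forall i, A i i = 2) /\
      (forall i j, i != j -> A i j <= 0),
      (forall i j, A i j = 0 <-> A j i = 0),
      (forall S : {set 'I_n},
          (forall i j, i \in S -> j \notin S -> A i j = 0) ->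
          S = set0 \/ S = setT)
    & (forall (k : nat) (f : 'I_k -> 'I_n), injective f ->
          0 < \det (\matrix_(i, j) A (f i) (f j)))].

(* Simple reflection s_i on Q' = (+)_j Z alpha'_j, coordinates as column
   vectors: s_i(alpha'_j) = alpha'_j - a_ji alpha'_i. *)
Definition refl_mx (n : nat) (A : 'M[int]_n) (i : 'I_n) : 'M[int]_n :=
  \matrix_(k, j) ((k == j)%:Z - (k == i)%:Z * A j i).

Definition word_mx (n : nat) (A : 'M[int]_n) (w : seq 'I_n) : 'M[int]_n :=
  foldr (fun i M => refl_mx A i *m M) 1%:M w.

Definition is_reduced (n : nat) (A : 'M[int]_n) (w : seq 'I_n) : Prop :=
  forall w' : seq 'I_n, word_mx A w' = word_mx A w -> (size w <= size w')%N.

(* w is a reduced word for the longest element w0: it is reduced and of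
   maximal length among reduced words (w0 is the unique element of maximal
   length). *)
Definition is_reduced_w0 (n : nat) (A : 'M[int]_n) (w : seq 'I_n) : Prop :=
  is_reduced A w /\ (forall w', is_reduced A w' -> (size w' <= size w)%N).

(* alpha^(k) = s_{i_N} ... s_{i_{k+1}} (alpha'_{i_k})  (0-indexed k). *)
Definition alpha_k (n N : nat) (A : 'M[int]_n) (w : N.-tuple 'I_n) (k : 'I_N)
  : 'cV[int]_n :=
  word_mx A (rev (drop k.+1 w)) *m delta_mx (tnth w k) 0.

Definition mcoef (n N : nat) (A : 'M[int]_n) (w : N.-tuple 'I_n) (k : 'I_N)
  (i : 'I_n) : int := alpha_k A w k i 0.

(* H_i : beta_k(x) = 0 whenever k^(+) = l exists, i.e. l > k is minimal
   with i_l = i_k. *)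
Definition in_H (n N : nat) (A : 'M[int]_n) (w : N.-tuple 'I_n)
  (x : 'I_N -> int) : Prop :=
  forall k l : 'I_N, (k < l)%N -> tnth w l = tnth w k ->
    (forall j : 'I_N, (k < j < l)%N -> tnth w j != tnth w k) ->
    x k + (\sum_(j : 'I_N | (k < j < l)%N) A (tnth w k) (tnth w j) * x j) + x l
      = 0.

(* If c = i_k = i_l with no c strictly between, write the roots through s_{i_k}: the telescoping
   expansion s_{i_{k+1}} ⋯ s_{i_{l-1}} α'_c = α'_c - Σ_{k<j<l} a_{c,i_j} s_{i_{l-1}} ⋯ s_{i_{j+1}} α'_{i_j}
   together with s_c α'_c = -α'_c gives α^(k) + Σ_{k<j<l} a_{c,i_j} α^(j) + α^(l) = 0, so pairing
   the roots with any h ∈ ℤ^n lands in ℋ.  Conversely, induct on the word: if i_1 recurs, the first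
   equation determines x_1 from the later coordinates; if not, the i_1-coordinate of every later
   α^(k) vanishes while that of α^(1) is 1, so h_{i_1} can be adjusted to match x_1.
   Only a_{cc} = 2 is used: the description of ℋ holds for every word, reduced or not. *)
From HB Require Import structures.
From mathcomp Require Import all_boot all_order all_algebra.
From mathcomp Require Import zify.
Import Order.TTheory GRing.Theory Num.Theory.
Local Open Scope ring_scope.

Lemma big_nat_between (R : nmodType) (F : nat -> R) (k l m : nat) :
  (k < l)%N -> (l <= m)%N ->
  \sum_(0 <= j < m | (k < j < l)%N) F j = \sum_(0 <= p < l - k.+1) F (k.+1 + p)%N.
Proof.
move=> lt_kl le_lm.
rewrite big_mkcond (big_cat_nat (leq0n l) le_lm) /=.
rewrite [X in _ + X]big_nat_cond [X in _ + X]big1 ?addr0; last first.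
  by move=> j /andP[/andP[le_lj _] _]; rewrite [(j < l)%N]ltnNge le_lj andbF.
rewrite (big_cat_nat (leq0n k.+1) lt_kl) /= big_nat_cond big1 ?add0r; last first.
  by move=> j /andP[/andP[_ lt_jk] _]; rewrite [(k < j)%N]ltnNge -ltnS lt_jk.
rewrite -{1}(add0n k.+1) big_addn; apply: eq_big_nat => p /andP[_ lt_p].
by rewrite ifT addnC //; lia.
Qed.

Section WordRoots.

Set Implicit Arguments.

Variables (n : nat) (A : 'M[int]_n).

Local Notation simple_root c := (delta_mx c 0 : 'cV[int]_n).

Lemma word_mx_cat (u v : seq 'I_n) :
  word_mx A (u ++ v) = word_mx A u *m word_mx A v.
Proof. by elim: u => [|a u IH] /=; rewrite ?mul1mx // IH mulmxA. Qed.

Lemma word_mx_rcons (u : seq 'I_n) (a : 'I_n) :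
  word_mx A (rcons u a) = word_mx A u *m refl_mx A a.
Proof. by rewrite -cats1 word_mx_cat /= mulmx1. Qed.

Lemma refl_mx_delta (a c : 'I_n) :
  refl_mx A a *m simple_root c = simple_root c - A c a *: simple_root a.
Proof.
apply/matrixP => i j; rewrite !mxE (bigD1 c) //= big1 => [|k /negbTE kc]; last first.
  by rewrite !mxE kc mulr0.
rewrite !mxE !eqxx (ord1 j) addr0 mulr1.
by case: (i == a); case: (i == c); rewrite ?mulr1 ?mulr0 ?mul1r ?mul0r.
Qed.

Lemma word_mx_notin (u : seq 'I_n) (c : 'I_n) (v : 'cV[int]_n) :
  c \notin u -> (word_mx A u *m v) c 0 = v c 0.
Proof.
elim: u => [|a u IH] /=; first by rewrite mul1mx.
rewrite in_cons negb_or => /andP[/negbTE ca cu]; rewrite -mulmxA -IH //.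
rewrite mxE (bigD1 c) //= big1 => [|k /negbTE kc]; rewrite !mxE ?eqxx ?ca.
  by rewrite /= mul0r subr0 mul1r.
by rewrite (eq_sym c k) kc mul0r subr0 mul0r.
Qed.

Variable d : 'I_n.

(* [word_root s p] is α^(p+1) for the word s; the default d is only read when p >= size s. *)
Definition word_root (s : seq 'I_n) (p : nat) : 'cV[int]_n :=
  word_mx A (rev (drop p.+1 s)) *m simple_root (nth d s p).

Lemma word_root_cat (u s : seq 'I_n) (p : nat) :
  word_root (u ++ s) (size u + p) = word_root s p.
Proof. by rewrite /word_root drop_cat nth_cat !ifF -?addnS ?addKn //; lia. Qed.

Lemma word_mx_rev_delta (u : seq 'I_n) (c : 'I_n) :
  word_mx A (rev u) *m simple_root c =
  simple_root c - \sum_(0 <= p < size u) A c (nth d u p) *: word_root u p.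
Proof.
elim: u => [|a u IH]; first by rewrite /= big_geq // mul1mx subr0.
rewrite rev_cons word_mx_rcons -mulmxA refl_mx_delta mulmxBr IH /= big_nat_recl //=.
by rewrite -scalemxAr opprD addrAC addrA /word_root /= drop0.
Qed.

Lemma word_root_catl (u v : seq 'I_n) (p : nat) : (p < size u)%N ->
  word_root (u ++ v) p = word_mx A (rev v) *m word_root u p.
Proof.
move=> lt_pu; rewrite /word_root nth_cat lt_pu mulmxA -word_mx_cat -rev_cat drop_cat.
case: ltnP => [//|le_up]; have <- : size u = p.+1 by apply/eqP; rewrite eqn_leq le_up.
by rewrite subnn drop0 drop_size.
Qed.

Lemma word_root_repeat (c : 'I_n) (u s : seq 'I_n) : A c c = 2 ->
  let t := c :: u ++ c :: s in
  word_root t 0 + \sum_(0 <= p < size u) A c (nth d u p) *: word_root t p.+1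
    + word_root t (size u).+1 = 0.
Proof.
move=> Acc t; set W := word_mx A (rev s).
have rootE p : (p <= size u)%N ->
    word_root t p = W *m refl_mx A c *m word_root (c :: u) p.
  by move=> le_pu; rewrite /t -cat_cons word_root_catl // rev_cons word_mx_rcons.
have -> : \sum_(0 <= p < size u) A c (nth d u p) *: word_root t p.+1 =
    W *m refl_mx A c *m \sum_(0 <= p < size u) A c (nth d u p) *: word_root u p.
  rewrite mulmx_sumr; apply: eq_big_nat => p /andP[_ lt_pu].
  by rewrite rootE // -scalemxAr.
have -> : word_root t (size u).+1 = W *m simple_root c.
  rewrite /t -[(size u).+1]/(size (c :: u)) -cat_cons -[size _]addn0 word_root_cat.
  by rewrite /word_root /= drop0.
rewrite rootE // [word_root _ 0]/word_root /= drop0 word_mx_rev_delta mulmxBr subrK.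
rewrite -mulmxA refl_mx_delta Acc scaler_nat mulr2n opprD addrA subrr sub0r.
by rewrite mulmxN addNr.
Qed.

Definition pairing (h : 'I_n -> int) (v : 'cV[int]_n) : int :=
  \sum_(i < n) v i 0 * h i.

Lemma pairingD h (u v : 'cV[int]_n) : pairing h (u + v) = pairing h u + pairing h v.
Proof. by rewrite /pairing -big_split; apply: eq_bigr => i _; rewrite mxE mulrDl. Qed.

Lemma pairingZ h (a : int) (v : 'cV[int]_n) : pairing h (a *: v) = a * pairing h v.
Proof. by rewrite /pairing mulr_sumr; apply: eq_bigr => i _; rewrite mxE mulrA. Qed.

Lemma pairing0 h : pairing h 0 = 0.
Proof. by rewrite /pairing big1 // => i _; rewrite mxE mul0r. Qed.

Lemma pairing_sum h (m : nat) (F : nat -> 'cV[int]_n) :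
  pairing h (\sum_(0 <= p < m) F p) = \sum_(0 <= p < m) pairing h (F p).
Proof.
by rewrite /pairing exchange_big; apply: eq_bigr => i _; rewrite summxE mulr_suml.
Qed.

Lemma pairing_shift h (c : 'I_n) (a : int) (v : 'cV[int]_n) :
  pairing (fun i => h i + (i == c)%:R * a) v = pairing h v + v c 0 * a.
Proof.
rewrite /pairing; under eq_bigr do rewrite mulrDr; rewrite big_split /=; congr (_ + _).
rewrite (bigD1 c) //= big1 ?addr0 ?eqxx ?mul1r // => i /negbTE ->.
by rewrite mul0r mulr0.
Qed.

Definition seq_H (s : seq 'I_n) (x : nat -> int) : Prop :=
  forall k l, (k < l)%N -> (l < size s)%N -> nth d s l = nth d s k ->
    (forall j, (k < j < l)%N -> nth d s j != nth d s k) ->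
    x k + \sum_(0 <= j < size s | (k < j < l)%N) A (nth d s k) (nth d s j) * x j
      + x l = 0.

Lemma seq_H_behead (c : 'I_n) (s : seq 'I_n) (x : nat -> int) :
  seq_H (c :: s) x -> seq_H s (fun k => x k.+1).
Proof.
move=> Hx k l lt_kl lt_ls eq_lk between.
have between_cons j :
    (k.+1 < j < l.+1)%N -> nth d (c :: s) j != nth d (c :: s) k.+1.
  by case: j => [|j] //; apply: between.
have := Hx k.+1 l.+1 lt_kl lt_ls eq_lk between_cons.
by rewrite !big_nat_between // 1?ltnW.
Qed.

Hypothesis Adiag : forall c, A c c = 2.

Lemma pairing_word_root_repeat h (s : seq 'I_n) (k l : nat) :
  (k < l)%N -> (l < size s)%N -> nth d s l = nth d s k ->
  pairing h (word_root s k)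
    + \sum_(0 <= j < size s | (k < j < l)%N)
        A (nth d s k) (nth d s j) * pairing h (word_root s j)
    + pairing h (word_root s l) = 0.
Proof.
move=> lt_kl lt_ls eq_lk.
set c := nth d s k; set u := take (l - k.+1) (drop k.+1 s).
have size_u : size u = (l - k.+1)%N by rewrite size_takel // size_drop; lia.
have root_drop j : word_root s (k + j) = word_root (drop k s) j.
  have le_ks : (k <= size s)%N by lia.
  by have := word_root_cat (take k s) (drop k s) j; rewrite cat_take_drop size_takel.
have drop_k : drop k s = c :: u ++ c :: drop l.+1 s.
  rewrite (drop_nth d (ltn_trans lt_kl lt_ls)) -[drop k.+1 s](cat_take_drop (l - k.+1)).
  by rewrite drop_drop subnK // [drop l s](drop_nth d lt_ls) eq_lk.
have root_k : word_root s k = word_root (drop k s) 0 by rewrite -root_drop addn0.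
have root_l : word_root s l = word_root (drop k s) (size u).+1.
  by rewrite -root_drop size_u; congr word_root; lia.
rewrite big_nat_between //; last exact: ltnW.
rewrite root_k root_l -size_u.
rewrite (eq_big_nat _ _ (F2 := fun p =>
    A c (nth d u p) * pairing h (word_root (drop k s) p.+1))); last first.
  move=> p /andP[_ lt_pu]; rewrite addSnnS root_drop -nth_drop drop_k /=.
  by rewrite nth_cat lt_pu.
have := congr1 (pairing h) (word_root_repeat c u (drop l.+1 s) (Adiag c)).
rewrite -drop_k pairing0 !pairingD pairing_sum => rel; rewrite -[RHS]rel.
by congr (_ + _ + _); apply: eq_bigr => p _; rewrite pairingZ.
Qed.

Lemma seq_H_spanned (s : seq 'I_n) (x : nat -> int) : seq_H s x ->
  exists h, forall k, (k < size s)%N -> x k = pairing h (word_root s k).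
Proof.
elim: s x => [|c s IH] x Hx; first by exists (fun _ => 0).
have [h Hh] := IH _ (seq_H_behead Hx).
have [c_in_s | c_notin_s] := boolP (c \in s).
  exists h; case=> [|k] lt_ks; last exact: Hh.
  pose l := (index c s).+1.
  have lt_is : (index c s < size s)%N by rewrite index_mem.
  have eq_l0 : nth d (c :: s) l = nth d (c :: s) 0 by rewrite /= nth_index.
  have between j : (0 < j < l)%N -> nth d (c :: s) j != nth d (c :: s) 0.
    by case: j => [|j] //= lt_j; exact: negbT (before_find d lt_j).
  have := etrans (Hx 0%N l isT lt_is eq_l0 between)
                 (esym (pairing_word_root_repeat h (c :: s) 0 l isT lt_is eq_l0)).
  rewrite Hh // (eq_bigr (fun j => A (nth d (c :: s) 0) (nth d (c :: s) j)
                                 * pairing h (word_root (c :: s) j))).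
    by move/addIr/addIr.
  by case=> [|j] // /andP[_ lt_j]; rewrite Hh //; apply: ltn_trans lt_is.
pose a := x 0%N - pairing h (word_root (c :: s) 0).
exists (fun i => h i + (i == c)%:R * a); case=> [|k] lt_ks; rewrite pairing_shift.
  rewrite /word_root /= drop0 word_mx_notin ?mem_rev // mxE eqxx mul1r.
  by rewrite /a /word_root /= drop0 addrC subrK.
rewrite Hh // /word_root /= word_mx_notin; last first.
  by rewrite mem_rev; apply: contra c_notin_s; apply: mem_drop.
rewrite mxE (_ : c == nth d s k = false) ?mul0r ?addr0 //.
by apply: contraNF c_notin_s => /eqP ->; apply: mem_nth.
Qed.

End WordRoots.

Lemma in_H_seq_H {n N : nat} (A : 'M[int]_n) (d : 'I_n) {w : N.-tuple 'I_n}
  {x : 'I_N -> int} {y : nat -> int} : (forall k : 'I_N, y k = x k) ->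
  in_H A w x <-> seq_H A d w y.
Proof.
move=> yx.
have sumE (k l : 'I_N) :
    \sum_(j : 'I_N | (k < j < l)%N) A (tnth w k) (tnth w j) * x j =
    \sum_(0 <= j < size w | (k < j < l)%N) A (nth d w k) (nth d w j) * y j.
  by rewrite size_tuple big_mkord; apply: eq_bigr => j _; rewrite !(tnth_nth d) yx.
split=> [Hx k l lt_kl | Hy k l lt_kl eq_lk between].
  rewrite [in X in (_ < X)%N]size_tuple => lt_lN eq_lk between.
  pose K := Ordinal (ltn_trans lt_kl lt_lN); pose L := Ordinal lt_lN.
  have := Hx K L lt_kl; rewrite sumE -!yx !(tnth_nth d); apply=> // j.
  rewrite !(tnth_nth d); exact: between.
rewrite sumE -!yx; apply: Hy; rewrite ?size_tuple -?(tnth_nth d) //.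
move=> j lt_j; have lt_jN : (j < N)%N by case/andP: lt_j => _ /ltn_trans; apply.
by rewrite -[nth d w j](tnth_nth d w (Ordinal lt_jN)); apply: between.
Qed.

Theorem lemma8p1 (n : nat) (A : 'M[int]_n) (hA : is_simple_cartan A)
  (N : nat) (w : N.-tuple 'I_n) (hw : is_reduced_w0 A w) :
  forall x : 'I_N -> int,
    in_H A w x <->
    exists h : 'I_n -> int, forall k : 'I_N, x k = \sum_(i < n) mcoef A w k i * h i.
Proof.
move=> x; case: hA => n_gt0 [Adiag _] _ _ _; pose d := Ordinal n_gt0.
have pairingE h (k : 'I_N) :
    pairing h (word_root A d w k) = \sum_(i < n) mcoef A w k i * h i.
  by apply: eq_bigr => i _; rewrite /mcoef /alpha_k (tnth_nth d).
split=> [Hx | [h Hh]].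
  pose y j := if insub j is Some k then x k else 0.
  have yx (k : 'I_N) : y k = x k by rewrite /y valK.
  have [h Hh] := seq_H_spanned Adiag ((in_H_seq_H A d yx).1 Hx).
  by exists h => k; rewrite -yx Hh ?size_tuple // pairingE.
have hx (k : 'I_N) : pairing h (word_root A d w k) = x k by rewrite pairingE Hh.
apply/(in_H_seq_H A d (y := fun j => pairing h (word_root A d w j)) hx).
by move=> k l lt_kl lt_ls eq_lk _; apply: pairing_word_root_repeat.
Qed.
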